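(* Let $q$ be even. The unipotent conjugacy classes of type $(2,1)$ in $\mathbf{SL}_3(q)$ are not of type F.
   Context: Type $(2,1)$: Jordan blocks of sizes 2 and 1. Conjugacy classes are racks with $x\triangleright y=xyx^{-1}$. A rack is of type F if it has pairwise disjoint subracks $R_1,\dots,R_4$ and elements $r_a\in R_a$ with $R_a\triangleright R_b=R_b$ and $r_a\triangleright r_b\neq r_b$ for all $a\neq b$. *)

From HB Require Import structures.
From mathcomp Require Import all_boot all_order all_algebra all_fingroup.
Set Implicit Arguments. Unset Strict Implicit. Unset Printing Implicit Defensive.
Import GRing.Theory.
Local Open Scope ring_scope.

(* Rack operation on a group: x |> y = x y x^-1.  (MathComp's y ^ g is g^-1 y g.) *)
Definition rtri (gT : finGroupType) (x y : gT) : gT := (y ^ x^-1)%g.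

Definition rack_act (gT : finGroupType) (A B : {set gT}) : {set gT} :=
  [set rtri x y | x in A, y in B].

Definition is_subrack (gT : finGroupType) (C R : {set gT}) : bool :=
  (R \subset C) && [forall x in R, forall y in R, rtri x y \in R].

Definition typeF (gT : finGroupType) (C : {set gT}) : Prop :=
  exists (R : 'I_4 -> {set gT}) (r : 'I_4 -> gT),
    [/\ forall a, is_subrack C (R a),
        forall a b, a != b -> [disjoint R a & R b],
        forall a, r a \in R a,
        forall a b, a != b -> rack_act (R a) (R b) = R b
      & forall a b, a != b -> rtri (r a) (r b) != r b].

Definition SL3 (F : finFieldType) : {set {'GL_3[F]}} :=
  [set g : {'GL_3[F]} | \det (GLval g) == 1%R].

(* Unipotent 3x3 matrix of Jordan type (2,1): N = A - 1 is nilpotent with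
   N^2 = 0 (largest block size 2) and rank N = 1 (exactly 3 - 1 = 2 blocks). *)
Definition unipotent_type21 (F : finFieldType) (A : 'M[F]_3) : bool :=
  ([&& (A - 1) ^+ 3 == 0, (A - 1) ^+ 2 == 0 & \rank (A - 1) == 1%N])%R.

From mathcomp Require Import all_boot all_order all_algebra all_fingroup all_solvable all_field.
Set Implicit Arguments. Unset Strict Implicit. Unset Printing Implicit Defensive.
Import GRing.Theory.
Local Open Scope ring_scope.

(* In characteristic 2 every element y of the class is an involution with
   y - 1 = u w and w u = 0.  For the elements r_a of a type-F datum put
   N_a = r_a - 1 and write a -> b when N_a N_b <> 0.  If N_a N_b = N_b N_a = 0
   then r_a and r_b commute, which type F forbids.  If both products are
   nonzero then r_b lies in R_a: when r_b r_a has odd order, r_b is conjugate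
   to r_a in the dihedral group <r_a, r_b>, which stabilises R_a; when the
   order is even, the central involution of that dihedral group is a unipotent
   element commuting with both transvections, and a direct computation shows
   it is trivial.  So -> is a tournament on four vertices, and the same
   argument applied to r_a |> r_b and r_c excludes 3-cycles.  A transitive
   tournament a -> b -> c -> d makes the matrix (w_i u_j) of the rows
   w_c, w_b, w_a against the columns u_d, u_c, u_b triangular with nonzero
   diagonal, so u_d, u_c, u_b form a basis killed by w_d <> 0. *)

Lemma finField_even_pchar2 (F : finFieldType) : ~~ odd #|F| -> 2 \in [pchar F].
Proof.
move=> even_F; have [p p_pr pcharFp] := finPcharP F.
have F_pgroup : (p.-group [set: F])%g := abelem_pgroup (fin_ring_pchar_abelem pcharFp).
have : (2 %| #|[set: F]|)%N by rewrite cardsT dvdn2.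
by move/pnat_dvd/(_ F_pgroup); rewrite pnatE // inE => /eqP p2; rewrite -p2 in pcharFp.
Qed.

Lemma acyclic_tournament4_chain (D : 'I_4 -> 'I_4 -> bool) :
    (forall a b, a != b -> D a b = ~~ D b a) ->
    (forall a b c, D a b -> D b c -> D c a -> False) ->
  exists a b c d, [&& D a b, D b c, D c d, ~~ D c b, ~~ D d b & ~~ D d c].
Proof.
move=> tourD acycD.
pose o0 := @Ordinal 4 0 isT; pose o1 := @Ordinal 4 1 isT.
pose o2 := @Ordinal 4 2 isT; pose o3 := @Ordinal 4 3 isT.
have r10 := tourD o1 o0 isT; have r20 := tourD o2 o0 isT; have r30 := tourD o3 o0 isT.
have r21 := tourD o2 o1 isT; have r31 := tourD o3 o1 isT; have r32 := tourD o3 o2 isT.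
case e01: (D o0 o1) in r10; case e02: (D o0 o2) in r20; case e03: (D o0 o3) in r30;
case e12: (D o1 o2) in r21; case e13: (D o1 o3) in r31; case e23: (D o2 o3) in r32;
simpl in r10, r20, r30, r21, r31, r32;
(* each of the 64 orientations either has a 3-cycle or is a transitive order *)
first [ exfalso; match goal with
   | H1 : D ?a ?b = true, H2 : D ?b ?c = true, H3 : D ?c ?a = true |- _ =>
     exact: (acycD _ _ _ H1 H2 H3) end
 | match goal with
   | H1 : D ?a ?b = true, H2 : D ?b ?c = true, H3 : D ?c ?d = true, H4 : D ?b ?d = true,
     H5 : D ?c ?b = false, H6 : D ?d ?b = false, H7 : D ?d ?c = false |- _ =>
     exists a, b, c, d; by rewrite H1 H2 H3 H5 H6 H7 end ].
Qed.

Section DihedralInvolutions.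
Variable gT : finGroupType.
Implicit Types (s t : gT) (A : {set gT}).
Local Open Scope group_scope.

Lemma rtri_closed_cycle A s t :
    (forall z, z \in A -> rtri s z \in A) -> (forall z, z \in A -> rtri t z \in A) ->
  forall z y, z \in A -> y \in <[t * s]> -> z ^ y \in A.
Proof.
move=> sA tA z y zA; rewrite -cycleV invMg => /cycleP[m ->].
elim: m => [|m IHm]; first by rewrite expg0 conjg1.
by rewrite expgSr conjgM; have := tA _ (sA _ IHm); rewrite /rtri conjgM.
Qed.

Lemma involution_conj_mul s t : s^-1 = s -> t^-1 = t -> (t * s) ^ s = (t * s)^-1.
Proof. by move=> sV tV; rewrite conjgE invMg sV tV -!mulgA -{2}sV mulVg mulg1. Qed.

Lemma involutions_conj_odd s t : s^-1 = s -> t^-1 = t -> odd #[t * s] ->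
  t \in s ^: <[t * s]>.
Proof.
move=> sV tV odd_g; set g := t * s; set y := g ^+ #[g]./2.
have ss : s * s = 1 by rewrite -{1}sV mulVg.
have sy : s * y = y^-1 * s.
  have ys : y ^ s = y^-1 by rewrite conjXg involution_conj_mul // expVgn.
  by rewrite -ys conjgE sV -!mulgA ss mulg1.
have yyg : (y * y)^-1 = g.
  have oddE : (#[g]./2).*2.+1 = #[g] by rewrite -[RHS]odd_double_half odd_g.
  by apply/eqP; rewrite eq_invg_mul -expgD -expgSr addnn oddE expg_order.
apply/imsetP; exists y; first exact: mem_cycle.
by rewrite conjgE sy mulgA -invMg yyg /g -mulgA ss mulg1.
Qed.

Lemma dihedral_central_involution s t : s^-1 = s -> t^-1 = t -> ~~ odd #[t * s] ->
  exists2 h, h \in <[t * s]> & [/\ h != 1, h * h = 1, commute h s & commute h t].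
Proof.
move=> sV tV even_g; set g := t * s; set k := #[g]./2.
have kk : (k + k = #[g])%N by rewrite addnn even_halfK.
have k_gt0 : (0 < k)%N.
  by rewrite lt0n; apply: contraTneq (order_gt0 g) => k0; rewrite -kk k0.
exists (g ^+ k); first exact: mem_cycle.
have hh : g ^+ k * g ^+ k = 1 by rewrite -expgD kk expg_order.
have hs : commute (g ^+ k) s.
  have hsE : (g ^+ k) ^ s = g ^+ k.
    by rewrite conjXg involution_conj_mul // expVgn (mulg1_eq hh).
  by rewrite /commute conjgC hsE.
split=> //.
- apply/eqP => h1.
  have : (k + k <= k)%N by rewrite kk dvdn_leq // order_dvdn h1.
  by rewrite -{3}[k]addn0 leq_add2l leqNgt k_gt0.
- have gs : g * s = t by rewrite /g -mulgA -{1}sV mulVg mulg1.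
  rewrite -gs.
  exact: commuteM (commute_sym (commuteX _ (commute_refl g))) hs.
Qed.
End DihedralInvolutions.

Section RankOneSquareZero.
Variables (F : fieldType) (n : nat).
Implicit Types (u : 'cV[F]_n) (w : 'rV[F]_n) (M N P S T H : 'M[F]_n).

Definition dotmx w u : F := (w *m u) 0 0.

Definition rank1_sqzero N := exists u w, [/\ N = u *m w, dotmx w u = 0 & N != 0].

Lemma mulmx_dotmx w u : w *m u = (dotmx w u)%:M.
Proof. exact: mx11_scalar. Qed.

Lemma mulmx_outer u w u' w' : u *m w *m (u' *m w') = dotmx w u' *: (u *m w').
Proof. by rewrite mulmxA -(mulmxA u) mulmx_dotmx mul_mx_scalar scalemxAl. Qed.

Lemma mulmx_outer_cV u w u' : u *m w *m u' = dotmx w u' *: u.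
Proof. by rewrite -mulmxA mulmx_dotmx mul_mx_scalar. Qed.

Lemma outer_eq0 u w : (u *m w == 0) = (u == 0) || (w == 0).
Proof.
apply/idP/idP => [|/orP[]/eqP->]; rewrite ?mul0mx ?mulmx0 //.
apply: contraLR; rewrite negb_or => /andP[/matrix0Pn[i [k ui]] /matrix0Pn[k' [j wj]]].
apply/matrix0Pn; exists i, j; rewrite !mxE big_ord1 (ord1 k) (ord1 k') in ui wj *.
by rewrite mulf_neq0.
Qed.

Lemma mulmx_outer_eq0 u w u' w' : u *m w != 0 -> u' *m w' != 0 ->
  (u *m w *m (u' *m w') == 0) = (dotmx w u' == 0).
Proof.
rewrite !outer_eq0 !negb_or => /andP[/negbTE u0 _] /andP[_ /negbTE w'0].
by rewrite mulmx_outer scalemx_eq0 outer_eq0 u0 w'0 !orbF.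
Qed.

Lemma mulmx_outer_neq0 u w M N :
  M *m (u *m w) != 0 -> u *m w *m N != 0 -> M *m (u *m w) *m N != 0.
Proof.
move=> Muw uwN; rewrite mulmxA -mulmxA outer_eq0 negb_or; apply/andP; split.
  by apply: contraNneq Muw; rewrite mulmxA => ->; rewrite mul0mx.
by apply: contraNneq uwN; rewrite -mulmxA => ->; rewrite mulmx0.
Qed.

Lemma rank1_sqzero_sqr N : rank1_sqzero N -> N *m N = 0.
Proof. by case=> u [w [-> wu _]]; rewrite mulmx_outer wu scale0r. Qed.

Lemma rank1_sqzero_rank1 N : \rank N = 1%N -> N *m N = 0 -> rank1_sqzero N.
Proof.
move=> rN NN; pose u : 'cV_n := col_ebase N *m pid_mx 1%N.
pose w : 'rV_n := pid_mx 1%N *m row_ebase N.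
have NE : N = u *m w.
  have pid1 : pid_mx 1%N = (pid_mx 1%N : 'M_(n, 1)) *m pid_mx 1%N :> 'M[F]_n.
    by rewrite mul_pid_mx.
  by rewrite -[LHS]mulmx_ebase rN pid1 /u /w !mulmxA.
have uw0 : u *m w != 0 by rewrite -NE -mxrank_eq0 rN.
exists u, w; split=> //; last by rewrite NE.
by apply/eqP; rewrite -(mulmx_outer_eq0 uw0 uw0) -NE NN.
Qed.

Lemma rank1_sqzero_conj P N : P \in unitmx -> rank1_sqzero N ->
  rank1_sqzero (invmx P *m N *m P).
Proof.
move=> uP [u [w [-> wu N0]]]; exists (invmx P *m u), (w *m P); split.
- by rewrite !mulmxA.
- by rewrite /dotmx -mulmxA (mulmxA P) mulmxV // mul1mx.
- apply: contraNneq N0 => /(congr1 (fun X => P *m X *m invmx P)).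
  by rewrite mulmx0 mul0mx !mulmxA mulmxV // mul1mx mulmxK // => ->.
Qed.

Lemma comm_mx_sub1_mul0 S T :
  (S - 1) *m (T - 1) = 0 -> (T - 1) *m (S - 1) = 0 -> comm_mx S T.
Proof.
move=> NsNt NtNs; rewrite /comm_mx -(subrK 1 S) -(subrK 1 T).
move: (S - 1) (T - 1) NsNt NtNs => Ns Nt NsNt NtNs.
by rewrite !mulmxDl !mulmxDr !mul1mx !mulmx1 NsNt NtNs !add0r !addrA (addrC Ns).
Qed.

Lemma sqzero_comm_outer_annihilates M u w u' : M *m M = 0 ->
  comm_mx M (u *m w) -> dotmx w u' != 0 -> M *m u = 0.
Proof.
move=> MM Muw a0; have [-> | u0] := eqVneq u 0; first by rewrite mulmx0.
set a := dotmx w u' in a0; set mu := dotmx w (M *m u').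
have Mu : a *: (M *m u) = mu *: u.
  have := congr1 (mulmx^~ u') Muw; rewrite /= -mulmxA mulmx_outer_cV.
  by rewrite -scalemxAr -mulmxA mulmx_outer_cV.
have mu_Mu : mu *: (M *m u) = 0.
  by have := congr1 (mulmx M) Mu; rewrite -!scalemxAr mulmxA MM mul0mx scaler0 => <-.
have mu0 : mu = 0.
  have : (mu * mu) *: u = 0 by rewrite -scalerA -Mu scalerA mulrC -scalerA mu_Mu scaler0.
  by move/eqP; rewrite scalemx_eq0 (negbTE u0) orbF mulf_eq0 orbb => /eqP.
by move/eqP: Mu; rewrite mu0 scale0r scalemx_eq0 (negbTE a0) => /eqP.
Qed.

Lemma mulmx_exp_fixed P N k : P *m N = N -> P ^+ k *m N = N.
Proof.
move=> PN; elim: k => [|k IHk]; first by rewrite expr0 mul1mx.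
by rewrite exprS -mulmxE -mulmxA IHk.
Qed.

Lemma comm_mx_sub1 S T : comm_mx S T -> comm_mx (S - 1) (T - 1).
Proof.
move=> ST; apply/comm_mx_sym/comm_mxB; last exact: comm_mx1.
by apply/comm_mx_sym/comm_mxB => //; exact: comm_mx1.
Qed.

Lemma unipotent_comm_power_eq1 S T H k :
    rank1_sqzero (S - 1) -> rank1_sqzero (T - 1) ->
    (S - 1) *m (T - 1) != 0 -> (T - 1) *m (S - 1) != 0 ->
    (H - 1) *m (H - 1) = 0 -> comm_mx H S -> comm_mx H T -> H = (T * S) ^+ k ->
  H = 1.
Proof.
move=> [u1 [w1 [NsE w1u1 _]]] [u2 [w2 [NtE w2u2 _]]] NsNt NtNs MM HS HT HE.
have a0 : dotmx w1 u2 != 0.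
  by apply: contraNneq NsNt; rewrite NsE NtE mulmx_outer => ->; rewrite scale0r.
have b0 : dotmx w2 u1 != 0.
  by apply: contraNneq NtNs; rewrite NsE NtE mulmx_outer => ->; rewrite scale0r.
(* S - 1 and T - 1 vanish on the range of 1 - E, and H - 1 on that of E. *)
pose E := (dotmx w2 u1)^-1 *: (u1 *m w2) + (dotmx w1 u2)^-1 *: (u2 *m w1).
have fixE X : (X - 1) *m E = X - 1 -> X *m (1 - E) = 1 - E.
  move=> XE; rewrite mulmxBr mulmx1 -{2}(subrK 1 X) mulmxDl XE mul1mx.
  by rewrite opprD addrA subKr.
have fixS : S *m (1 - E) = 1 - E.
  apply: fixE; rewrite NsE mulmxDr -!scalemxAr !mulmx_outer w1u1 scale0r scaler0.
  by rewrite add0r scalerA mulVf // scale1r.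
have fixT : T *m (1 - E) = 1 - E.
  apply: fixE; rewrite NtE mulmxDr -!scalemxAr !mulmx_outer w2u2 scale0r scaler0.
  by rewrite addr0 scalerA mulVf // scale1r.
have M_1E : (H - 1) *m (1 - E) = 0.
  by rewrite HE mulmxBl mulmx_exp_fixed ?mul1mx ?subrr // -mulmxE -mulmxA fixS.
have Mu1 : (H - 1) *m u1 = 0.
  by apply: (sqzero_comm_outer_annihilates MM _ a0); rewrite -NsE; exact: comm_mx_sub1.
have Mu2 : (H - 1) *m u2 = 0.
  by apply: (sqzero_comm_outer_annihilates MM _ b0); rewrite -NtE; exact: comm_mx_sub1.
have ME : (H - 1) *m E = 0.
  by rewrite mulmxDr -!scalemxAr !mulmxA Mu1 Mu2 !mul0mx !scaler0 addr0.
by apply/eqP; rewrite -subr_eq0; move: M_1E; rewrite mulmxBr mulmx1 ME subr0 => ->.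
Qed.
End RankOneSquareZero.

Section Char2.
Variables (F : fieldType) (n : nat).
Hypothesis pcharF2 : 2 \in [pchar F].
Implicit Types (A B C H Y : 'M[F]_n.+1).

Lemma pchar2_mx : 2 \in [pchar 'M[F]_n.+1].
Proof.
rewrite !inE /=; apply/eqP/matrixP => i j.
by rewrite mulmxnE !mxE mulr2n addrr_pchar2.
Qed.

Lemma rank1_sqzero_involution Y : rank1_sqzero (Y - 1) -> Y *m Y = 1.
Proof.
move=> /rank1_sqzero_sqr NN; rewrite -(subrK 1 Y); move: (Y - 1) NN => N NN.
by rewrite mulmxDl !mulmxDr !mul1mx mulmx1 NN add0r addrA (addrr_pchar2 pchar2_mx) add0r.
Qed.

Lemma involution_sqzero H : H *m H = 1 -> (H - 1) *m (H - 1) = 0.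
Proof.
move=> HH; rewrite mulmxBl !mulmxBr HH !mulmx1 mul1mx !(oppr_pchar2 pchar2_mx).
by rewrite (addrC H) (addrr_pchar2 pchar2_mx).
Qed.

Lemma conj_rank1_sqzero_cycle A B C :
    rank1_sqzero (A - 1) -> (A - 1) *m (B - 1) != 0 -> (B - 1) *m (C - 1) != 0 ->
    (C - 1) *m (A - 1) != 0 -> (B - 1) *m (A - 1) = 0 -> (C - 1) *m (B - 1) = 0 ->
  (A *m B *m A - 1) *m (C - 1) != 0 /\ (C - 1) *m (A *m B *m A - 1) != 0.
Proof.
move=> tA AB BC CA BA CB; have AA := rank1_sqzero_involution tA.
have [unitA _] := mulmx1_unit AA.
have ABA : A *m B *m A - 1 = A *m (B - 1) *m A by rewrite mulmxBr mulmxBl mulmx1 AA.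
rewrite ABA; split.
  have -> : A *m (B - 1) *m A *m (C - 1) = A *m ((B - 1) *m (C - 1)).
    rewrite -!mulmxA -{2}(subrK 1 A) [(A - 1 + 1) *m _]mulmxDl mul1mx mulmxDr.
    by rewrite (mulmxA (B - 1)) BA mul0mx add0r.
  by apply: contraNneq BC => /(congr1 (mulmx A)); rewrite mulmxA AA mul1mx mulmx0 => ->.
have -> : (C - 1) *m (A *m (B - 1) *m A) = (C - 1) *m (A - 1) *m (B - 1) *m A.
  rewrite !mulmxA -{1}(subrK 1 A) [(C - 1) *m (_ + 1)]mulmxDr mulmx1.
  by rewrite [((C - 1) *m (A - 1) + _) *m _]mulmxDl CB addr0.
case: tA => u [w [NA _ _]]; rewrite NA in AB CA *.
by rewrite mulmx_free_eq0 ?row_free_unit // mulmx_outer_neq0.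
Qed.
End Char2.

Lemma rank1_sqzero_chain4_false (F : fieldType) (Na Nb Nc Nd : 'M[F]_3) :
    rank1_sqzero Na -> rank1_sqzero Nb -> rank1_sqzero Nc -> rank1_sqzero Nd ->
    Na *m Nb != 0 -> Nb *m Nc != 0 -> Nc *m Nd != 0 ->
    Nc *m Nb = 0 -> Nd *m Nb = 0 -> Nd *m Nc = 0 ->
  False.
Proof.
move=> [ua [wa [-> _ Na0]]] [ub [wb [-> wbub Nb0]]] [uc [wc [-> wcuc Nc0]]].
move=> [ud [wd [-> wdud Nd0]]].
rewrite !mulmx_outer_eq0 // => ab bc cd /eqP; rewrite mulmx_outer_eq0 // => /eqP cb.
move=> /eqP; rewrite mulmx_outer_eq0 // => /eqP db /eqP; rewrite mulmx_outer_eq0 // => /eqP dc.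
pose u (j : 'I_3) := nth 0 [:: ud; uc; ub] j; pose w (i : 'I_3) := nth 0 [:: wc; wb; wa] i.
pose U := \matrix_(i, j) u j i 0; pose W := \matrix_(i, j) w i 0 j.
have WU i j : (W *m U) i j = dotmx (w i) (u j).
  by rewrite mxE /dotmx mxE; apply: eq_bigr => k _; rewrite !mxE.
have WU_trig : is_trig_mx (W *m U).
  apply/is_trig_mxP => i j; rewrite WU.
  by case: i => [[|[|[|i]]] Hi]; case: j => [[|[|[|j]]] Hj].
have unitU : U \in unitmx.
  have : \det (W *m U) != 0.
    rewrite det_trig // big_ord_recr /= big_ord_recr /= big_ord1 !WU.
    by rewrite !mulf_neq0.
  by rewrite det_mulmx unitmxE unitfE; apply: contraNneq => ->; rewrite mulr0.
have wdU : wd *m U = 0.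
  apply/matrixP => i j; rewrite !mxE (ord1 i).
  transitivity (dotmx wd (u j)).
    by rewrite /dotmx mxE; apply: eq_bigr => k _; rewrite mxE.
  by case: j => [[|[|[|j]]] Hj].
move: Nd0; rewrite outer_eq0 negb_or => /andP[_ /eqP[]].
by rewrite -(mulmxK unitU wd) wdU mul0mx.
Qed.

Lemma unipotent_type21_rank1_sqzero (F : finFieldType) (A : 'M[F]_3) :
  unipotent_type21 A -> rank1_sqzero (A - 1).
Proof. by case/and3P=> _ /eqP sqA /eqP rkA; apply: rank1_sqzero_rank1; rewrite // -expr2. Qed.

Section TransvectionsGL.
Variables (F : finFieldType) (n : nat).
Hypothesis pcharF2 : 2 \in [pchar F].
Implicit Types (s t y g : {'GL_n.+1[F]}) (A : {set {'GL_n.+1[F]}}).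
Local Notation N y := (GLval y - 1).

Lemma GLval_expg g k : GLval (g ^+ k)%g = GLval g ^+ k.
Proof. by elim: k => // k IHk; rewrite expgS exprS GL_ME IHk. Qed.

Lemma rank1_sqzero_conjg y g : rank1_sqzero (N y) -> rank1_sqzero (N (y ^ g)%g).
Proof.
have -> : N (y ^ g)%g = invmx (GLval g) *m N y *m GLval g.
  by rewrite mulmxBr mulmxBl mulmx1 mulVmx ?GL_unitmx // conjgE !GL_MxE GL_VxE mulmxA.
exact/rank1_sqzero_conj/GL_unitmx.
Qed.

Lemma rank1_sqzero_GL_invV y : rank1_sqzero (N y) -> (y^-1 = y)%g.
Proof. by move/(rank1_sqzero_involution pcharF2) => yy; apply/mulg1_eq/val_inj. Qed.

Lemma GLval_rtri_involution s t :
  (s^-1 = s)%g -> GLval (rtri s t) = GLval s *m GLval t *m GLval s.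
Proof. by move=> sV; rewrite /rtri sV conjgE sV !GL_MxE mulmxA. Qed.

Lemma rtri_sqzero_fix s t : N s *m N t = 0 -> N t *m N s = 0 -> rtri s t = t.
Proof.
move=> st ts; have st_comm : commute s t by apply/val_inj/comm_mx_sub1_mul0.
by apply/conjg_fixP/commgP/commuteV/commute_sym.
Qed.

Lemma rank1_sqzero_pair_mem A s t :
    rank1_sqzero (N s) -> rank1_sqzero (N t) -> N s *m N t != 0 -> N t *m N s != 0 ->
    s \in A -> (forall z, z \in A -> rtri s z \in A) ->
    (forall z, z \in A -> rtri t z \in A) ->
  t \in A.
Proof.
move=> tvs tvt st ts sA closed_s closed_t.
have [sV tV] := (rank1_sqzero_GL_invV tvs, rank1_sqzero_GL_invV tvt).
have [odd_ts | even_ts] := boolP (odd #[t * s]%g).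
  have /imsetP[y y_ts ->] := involutions_conj_odd sV tV odd_ts.
  exact: rtri_closed_cycle closed_s closed_t _ _ sA y_ts.
have [_ /cycleP[k ->] [h1 hh hs ht]] := dihedral_central_involution sV tV even_ts.
case/eqP: h1; apply: val_inj.
apply: (unipotent_comm_power_eq1 tvs tvt st ts); last exact: GLval_expg.
- exact/involution_sqzero/(congr1 val hh).
- exact: (congr1 val hs).
- exact: (congr1 val ht).
Qed.
End TransvectionsGL.

Section TypeFTransvections.
Variable F : finFieldType.
Hypothesis pcharF2 : 2 \in [pchar F].
Variables (C : {set {'GL_3[F]}}) (R : 'I_4 -> {set {'GL_3[F]}}) (r : 'I_4 -> {'GL_3[F]}).
Hypothesis C_sqzero : forall y, y \in C -> rank1_sqzero (GLval y - 1).
Hypothesis R_subrack : forall a, is_subrack C (R a).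
Hypothesis R_disjoint : forall a b, a != b -> [disjoint R a & R b].
Hypothesis r_mem : forall a, r a \in R a.
Hypothesis R_act : forall a b, a != b -> rack_act (R a) (R b) = R b.
Hypothesis r_act : forall a b, a != b -> rtri (r a) (r b) != r b.

Let Nr a := GLval (r a) - 1.
Let D a b := Nr a *m Nr b != 0.

Lemma R_sqzero a y : y \in R a -> rank1_sqzero (GLval y - 1).
Proof. by case/andP: (R_subrack a) => /subsetP RC _ /RC/C_sqzero. Qed.

Lemma Nr_sqzero a : rank1_sqzero (Nr a).
Proof. exact: R_sqzero (r_mem a). Qed.

Lemma rtri_R a b y z : y \in R a -> z \in R b -> rtri y z \in R b.
Proof.
move=> ya zb; have [ab | ab] := eqVneq a b; last by rewrite -(R_act ab) imset2_f.
rewrite -ab in zb *; case/andP: (R_subrack a) => _ /forall_inP/(_ y ya)/forall_inP.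
exact.
Qed.

Lemma R_noncommuting_pair_false b c s t : b != c -> s \in R b -> t \in R c ->
  (GLval s - 1) *m (GLval t - 1) != 0 -> (GLval t - 1) *m (GLval s - 1) != 0 -> False.
Proof.
move=> bc sb tc st ts.
have tb : t \in R b.
  by apply: (rank1_sqzero_pair_mem pcharF2 (R_sqzero sb) (R_sqzero tc) st ts sb) => z;
    [exact: rtri_R sb | exact: rtri_R tc].
by rewrite (disjointFr (R_disjoint bc) tb) in tc.
Qed.

Lemma D_irrefl a : ~~ D a a.
Proof. by rewrite /D (rank1_sqzero_sqr (Nr_sqzero a)) eqxx. Qed.

Lemma D_tournament a b : a != b -> D a b = ~~ D b a.
Proof.
move=> ab; case Dab: (D a b); case Dba: (D b a) => //=.
  by case: (R_noncommuting_pair_false ab (r_mem a) (r_mem b) Dab Dba).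
move/negbFE/eqP: Dab => Dab; move/negbFE/eqP: Dba => Dba.
by case/eqP: (r_act ab); apply: rtri_sqzero_fix.
Qed.

Lemma D_acyclic a b c : D a b -> D b c -> D c a -> False.
Proof.
move=> Dab Dbc Dca.
have neqD x y : D x y -> x != y by move=> Dxy; apply: contraTneq Dxy => ->; exact: D_irrefl.
have back x y : D x y -> Nr y *m Nr x = 0.
  move=> Dxy; apply/eqP/negbFE; change (D y x = false).
  by rewrite D_tournament ?Dxy // eq_sym neqD.
have [ba cb] := (back _ _ Dab, back _ _ Dbc).
have sb : rtri (r a) (r b) \in R b := rtri_R (r_mem a) (r_mem b).
have [sc cs] := conj_rank1_sqzero_cycle pcharF2 (Nr_sqzero a) Dab Dbc Dca ba cb.
have raV : ((r a)^-1 = r a)%g := rank1_sqzero_GL_invV pcharF2 (Nr_sqzero a).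
rewrite -(GLval_rtri_involution _ raV) in sc cs.
exact: R_noncommuting_pair_false (neqD _ _ Dbc) sb (r_mem c) sc cs.
Qed.

Lemma typeF_transvections_false : False.
Proof.
have [a [b [c [d /and3P[Dab Dbc /and4P[Dcd cb db dc]]]]]] :=
  acyclic_tournament4_chain D_tournament D_acyclic.
apply: (rank1_sqzero_chain4_false (Nr_sqzero a) (Nr_sqzero b) (Nr_sqzero c) (Nr_sqzero d)
  Dab Dbc Dcd); exact/eqP/negPn.
Qed.
End TypeFTransvections.

Lemma rank1_sqzero_not_typeF (F : finFieldType) (C : {set {'GL_3[F]}}) :
    2 \in [pchar F] -> (forall y, y \in C -> rank1_sqzero (GLval y - 1)) ->
  ~ typeF C.
Proof.
move=> pcharF2 C_sqzero [R [r [R_subrack R_disjoint r_mem R_act r_act]]].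
exact: (typeF_transvections_false pcharF2 C_sqzero R_subrack R_disjoint r_mem R_act r_act).
Qed.

Theorem mainTheorem17 (F : finFieldType) (q_even : ~~ odd #|F|)
  (x : {'GL_3[F]}) (xSL : x \in SL3 F) (xu : unipotent_type21 (GLval x)) :
  ~ typeF (x ^: SL3 F)%g.
Proof.
apply: rank1_sqzero_not_typeF; first exact: finField_even_pchar2.
move=> _ /imsetP[g _ ->]; apply: rank1_sqzero_conjg.
exact: unipotent_type21_rank1_sqzero.
Qed.
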